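(* Let $\mathcal S=[M]\times[N]$, and for each $\mathbf i=(i_1,i_2)\in\mathcal S$ let $\mathcal J_{\mathbf i}\subset\mathcal S$ and $\mathbf M_{\mathbf i}\in\mathbb R^{M\times N}$ with support contained in $\mathcal J_{\mathbf i}$. Let $\mathbf M=\sum_{\mathbf i\in\mathcal S}(\mathbf e_{i_2}\otimes\mathbf e_{i_1})\mathrm{vec}(\mathbf M_{\mathbf i})^\top\in\mathbb R^{MN\times MN}$. Then for every positive integer $p$ and every $\mathbf i=(i_1,i_2)\in\mathcal S$, $$\|(\mathbf e_{i_2}\otimes\mathbf e_{i_1})^\top\mathbf M^p\|_{\ell_0}\le\min\{J_\square\,p^2,\ MN\},$$ where $\|\cdot\|_{\ell_0}$ denotes the number of nonzero entries.
   Context: $\mathrm{vec}$ denotes column-major vectorization; $\mathbf e_{i_1}\in\mathbb R^M$, $\mathbf e_{i_2}\in\mathbb R^N$ are standard basis vectors. $J_\square=\min\{(2k_1+1)(2k_2+1): k_1,k_2\ge0 \text{ integers such that } \mathcal J_{\mathbf i}\subset\{i_1-k_1,\dots,i_1+k_1\}\times\{i_2-k_2,\dots,i_2+k_2\}\ \text{for all } \mathbf i=(i_1,i_2)\in\mathcal S\}$, i.e. the size of the smallest rectangle shape that, centered at each site, contains that site's neighborhood. *)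

From HB Require Import structures.
From mathcomp Require Import all_boot all_order all_algebra.
From mathcomp Require Import reals.
From mathcomp.real_closed Require Import mxtens.
From mathcomp Require Import zify.
From Stdlib Require Import Lia.
Set Implicit Arguments.
Unset Strict Implicit.
Unset Printing Implicit Defensive.
Import Order.TTheory GRing.Theory Num.Theory.
Local Open Scope ring_scope.

Definition site (M N : nat) := ('I_M * 'I_N)%type.

Definition evec (R : pzRingType) (n : nat) (i : 'I_n) : 'cV[R]_n := delta_mx i 0.

(* The entry A i1 i2
   sits at index i2 * M + i1, matching the Kronecker product e_{i2} (x) e_{i1}
   given by mathcomp-real-closed's [tensmx] (notation A *t B). *)
Definition vec (R : Type) (M N : nat) (A : 'M[R]_(M, N)) : 'cV[R]_(N * M) :=
  \col_k A (mxtens_unindex k).2 (mxtens_unindex k).1.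

Definition bigM (R : pzRingType) (M N : nat) (Mi : site M N -> 'M[R]_(M, N))
  : 'M[R]_(N * M) :=
  \sum_(i : site M N) (tensmx (evec R i.2) (evec R i.1)) *m (vec (Mi i))^T.

Definition l0 (R : pzRingType) (m n : nat) (A : 'M[R]_(m, n)) : nat :=
  #|[set ij : 'I_m * 'I_n | A ij.1 ij.2 != 0]|.

Definition rect_contains (M N : nat) (J : site M N -> {set site M N})
  (k1 k2 : nat) : bool :=
  [forall i : site M N, forall j in J i,
     [&& (j.1 <= i.1 + k1)%N, (i.1 <= j.1 + k1)%N,
         (j.2 <= i.2 + k2)%N & (i.2 <= j.2 + k2)%N]].

(* n is the size (2k1+1)(2k2+1) of an admissible rectangle shape
   (k1, k2 <= n is automatic since n >= 2k+1). *)
Definition Jbox_pred (M N : nat) (J : site M N -> {set site M N}) : pred nat :=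
  fun n => [exists k1 : 'I_n.+1, exists k2 : 'I_n.+1,
              (n == (2 * k1 + 1) * (2 * k2 + 1))%N && rect_contains J k1 k2].

Lemma Jbox_exists (M N : nat) (J : site M N -> {set site M N}) :
  exists n, Jbox_pred J n.
Proof.
exists ((2 * M + 1) * (2 * N + 1))%N.
have hM : (M < ((2 * M + 1) * (2 * N + 1)).+1)%N.
  rewrite ltnS; nia.
have hN : (N < ((2 * M + 1) * (2 * N + 1)).+1)%N.
  rewrite ltnS; nia.
apply/existsP; exists (Ordinal hM); apply/existsP; exists (Ordinal hN).
rewrite /= eqxx /=; apply/forallP => i; apply/forall_inP => j _.
case: i j => [[a ha] [b hb]] [[c hc] [d hd]] /=.
apply/and4P; split; lia.
Qed.

Definition Jbox (M N : nat) (J : site M N -> {set site M N}) : nat :=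
  ex_minn (Jbox_exists J).

(* The entry of bigM in row site k and column site l is the entry of M_k at l,
   so bigM only links k to sites of J k, which lie in the (k1, k2)-rectangle
   around k.  Rectangles add up along matrix products, so row i of bigM ^+ p is
   supported in the (p k1, p k2)-rectangle around i, which has at most
   (2 p k1 + 1)(2 p k2 + 1) <= (2 k1 + 1)(2 k2 + 1) p^2 sites. *)

From HB Require Import structures.
From mathcomp Require Import all_boot all_order all_algebra.
From mathcomp Require Import reals.
From mathcomp.real_closed Require Import mxtens.
From mathcomp Require Import zify.
From Stdlib Require Import Lia.
Import Order.TTheory GRing.Theory Num.Theory.
Set Implicit Arguments.
Unset Strict Implicit.
Unset Printing Implicit Defensive.
Local Open Scope ring_scope.

Definition nearn (w a b : nat) : bool := (b <= a + w)%N && (a <= b + w)%N.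

Lemma nearnn w a : nearn w a a.
Proof. by rewrite /nearn leq_addr. Qed.

Lemma nearn_trans v w a b c : nearn v a b -> nearn w b c -> nearn (v + w) a c.
Proof. by rewrite /nearn => /andP [? ?] /andP [? ?]; apply/andP; split; lia. Qed.

Lemma card_nearn n w c : (#|[set a : 'I_n | nearn w c a]| <= 2 * w + 1)%N.
Proof.
rewrite cardE -(size_map val) -(size_iota (c - w) (2 * w + 1)).
apply: uniq_leq_size; first by rewrite (map_inj_uniq val_inj) enum_uniq.
move=> x /mapP [a]; rewrite mem_enum inE => /andP [? ?] ->.
by rewrite mem_iota -[val a]/(nat_of_ord a); apply/andP; split; lia.
Qed.

Lemma l0_le (R : pzRingType) m n (A : 'M[R]_(m, n)) : (l0 A <= m * n)%N.
Proof. by apply: leq_trans (max_card _) _; rewrite card_prod !card_ord. Qed.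

Lemma l0_row_le (R : pzRingType) n (u : 'rV[R]_n) (S : {set 'I_n}) :
  (forall l, u 0 l != 0 -> l \in S) -> (l0 u <= #|S|)%N.
Proof.
move=> suppS; have -> : #|S| = #|setX [set: 'I_1] S| by rewrite cardsX cardsT card_ord mul1n.
apply/subset_leq_card/subsetP => -[a l]; rewrite !inE (ord1 a) /=.
exact: suppS.
Qed.

Lemma mulmx_coef_neq0 (R : pzRingType) m n q (A : 'M[R]_(m, n)) (B : 'M_(n, q)) i j :
  (A *m B) i j != 0 -> exists k, A i k != 0 /\ B k j != 0.
Proof.
move=> ABij; have /existsP [k /andP [Aik Bkj]] : [exists k, (A i k != 0) && (B k j != 0)].
  apply: contraNT ABij => /existsPn noterm; rewrite mxE big1 // => k _.
  by have /nandP [] := noterm k => /negbNE /eqP ->; rewrite ?mul0r ?mulr0.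
by exists k.
Qed.

Lemma mxpow_support (R : pzRingType) n (A : 'M[R]_n) (P : nat -> rel 'I_n) :
  (forall k, P 0%N k k) ->
  (forall m k j l, P m k j -> A j l != 0 -> P m.+1 k l) ->
  forall m k l, (A ^+ m) k l != 0 -> P m k l.
Proof.
move=> P0 PS; elim=> [|m IHm] k l.
  by rewrite expr0 mxE; case: (k =P l) => [->|_]; rewrite ?eqxx.
by rewrite exprSr -mulmxE => /mulmx_coef_neq0 [j [/IHm Pkj /(PS _ _ _ _ Pkj)]].
Qed.

Section Sites.
Variables M N : nat.

Definition site_index (i : site M N) : 'I_(N * M) := mxtens_index (i.2, i.1).

Definition index_site (k : 'I_(N * M)) : site M N :=
  ((mxtens_unindex k).2, (mxtens_unindex k).1).

Lemma site_indexK : cancel site_index index_site.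
Proof. by case=> a b; rewrite /index_site /site_index mxtens_indexK. Qed.

Lemma index_siteK : cancel index_site site_index.
Proof. exact: mxtens_unindexK. Qed.

Definition site_near (k1 k2 : nat) (i j : site M N) : bool :=
  nearn k1 i.1 j.1 && nearn k2 i.2 j.2.

Lemma site_nearxx k1 k2 i : site_near k1 k2 i i.
Proof. by rewrite /site_near !nearnn. Qed.

Lemma site_near_trans k1 k2 l1 l2 i j h :
  site_near k1 k2 i j -> site_near l1 l2 j h -> site_near (k1 + l1) (k2 + l2) i h.
Proof.
case/andP=> [ij1 ij2] /andP [jh1 jh2].
by rewrite /site_near (nearn_trans ij1 jh1) (nearn_trans ij2 jh2).
Qed.

Lemma card_site_near k1 k2 i :
  (#|[set j | site_near k1 k2 i j]| <= (2 * k1 + 1) * (2 * k2 + 1))%N.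
Proof.
have -> : [set j | site_near k1 k2 i j] =
          setX [set a : 'I_M | nearn k1 i.1 a] [set b : 'I_N | nearn k2 i.2 b].
  by apply/setP => -[a b]; rewrite !inE.
by rewrite cardsX leq_mul ?card_nearn.
Qed.

Lemma rect_containsP (J : site M N -> {set site M N}) k1 k2 :
  rect_contains J k1 k2 -> forall i j, j \in J i -> site_near k1 k2 i j.
Proof. by move=> /forallP rectJ i j /(forall_inP (rectJ i)); rewrite /site_near /nearn -andbA. Qed.

Section Tensor.
Variable R : pzRingType.

Lemma tens_evecE (i : site M N) k :
  (evec R i.2 *t evec R i.1) k ord0 = (k == site_index i)%:R.
Proof.
case: (mxtens_indexP k) => b a.
have -> : ord0 = mxtens_index (ord0 : 'I_1, ord0 : 'I_1) by apply: val_inj.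
rewrite tensmxE !mxE (inj_eq (can_inj (@mxtens_indexK _ _))) xpair_eqE.
by rewrite -natrM mulnb !eqxx !andbT.
Qed.

Lemma evec_row_mulmx (i : site M N) n (A : 'M[R]_(N * M, n)) l :
  ((evec R i.2 *t evec R i.1)^T *m A) 0 l = A (site_index i) l.
Proof.
rewrite mxE (bigD1 (site_index i)) //= big1 => [|k ne_ki].
  by rewrite mxE tens_evecE eqxx mul1r addr0.
by rewrite mxE tens_evecE (negbTE ne_ki) mul0r.
Qed.

Lemma bigME (Mi : site M N -> 'M[R]_(M, N)) k l :
  bigM Mi k l = Mi (index_site k) (index_site l).1 (index_site l).2.
Proof.
rewrite /bigM summxE (bigD1 (index_site k)) // big1 => [|j /andP [_ ne_jk]].
  by rewrite Monoid.mulm1 mxE big_ord1 tens_evecE index_siteK eqxx mul1r !mxE.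
have /negbTE ne_kj : k != site_index j.
  by apply: contra ne_jk => /eqP ->; rewrite site_indexK.
by rewrite mxE big_ord1 tens_evecE ne_kj mul0r.
Qed.

End Tensor.
End Sites.

Section Support.
Variables (R : pzRingType) (M N : nat).
Variables (J : site M N -> {set site M N}) (Mi : site M N -> 'M[R]_(M, N)).
Hypothesis suppJ : forall i a b, Mi i a b != 0 -> (a, b) \in J i.

Lemma bigM_neq0 k l : bigM Mi k l != 0 -> index_site l \in J (index_site k).
Proof. by rewrite bigME => /suppJ; rewrite -surjective_pairing. Qed.

Lemma bigM_pow_near k1 k2 : rect_contains J k1 k2 ->
  forall m k l, (bigM Mi ^+ m) k l != 0 ->
  site_near (m * k1) (m * k2) (index_site k) (index_site l).
Proof.
move=> rectJ; apply: mxpow_support => [k|m k j l near_kj].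
  by rewrite !mul0n site_nearxx.
move=> /bigM_neq0 /(rect_containsP rectJ) near_jl.
by rewrite !mulSnr; apply: site_near_trans near_kj near_jl.
Qed.

Lemma l0_evec_row_bigM_pow k1 k2 m (i : site M N) : rect_contains J k1 k2 ->
  (l0 ((evec R i.2 *t evec R i.1)^T *m bigM Mi ^+ m)
     <= (2 * (m * k1) + 1) * (2 * (m * k2) + 1))%N.
Proof.
move=> rectJ; apply: leq_trans (card_site_near (m * k1) (m * k2) i).
rewrite -(card_imset _ (can_inj (@site_indexK M N))); apply: l0_row_le => l.
rewrite evec_row_mulmx => /(bigM_pow_near rectJ); rewrite site_indexK => near_il.
by rewrite -[l]index_siteK imset_f // inE.
Qed.

End Support.

Lemma Jbox_witness M N (J : site M N -> {set site M N}) :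
  exists k1 k2, Jbox J = ((2 * k1 + 1) * (2 * k2 + 1))%N /\ rect_contains J k1 k2.
Proof.
rewrite /Jbox; case: ex_minnP => n /existsP [k1 /existsP [k2 /andP [/eqP Jn rectJ]]] _.
by exists k1, k2.
Qed.

Lemma box_scale_le p k1 k2 : (0 < p)%N ->
  ((2 * (p * k1) + 1) * (2 * (p * k2) + 1) <= (2 * k1 + 1) * (2 * k2 + 1) * p ^ 2)%N.
Proof.
move=> p_gt0; have scale k : (2 * (p * k) + 1 <= (2 * k + 1) * p)%N by nia.
by rewrite [(p ^ 2)%N]/(p * p)%N mulnACA leq_mul ?scale.
Qed.

Theorem lemma4 (R : realType) (M N : nat)
  (J : site M N -> {set site M N}) (Mi : site M N -> 'M[R]_(M, N))
  (hsupp : forall (i : site M N) (a : 'I_M) (b : 'I_N),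
      Mi i a b != 0 -> (a, b) \in J i)
  (p : nat) (hp : (0 < p)%N) (i : site M N) :
  (l0 ((tensmx (evec R i.2) (evec R i.1))^T *m (bigM Mi) ^+ p)
     <= minn (Jbox J * p ^ 2) (M * N))%N.
Proof.
have [k1 [k2 [-> rectJ]]] := Jbox_witness J.
rewrite leq_min; apply/andP; split.
  exact: leq_trans (l0_evec_row_bigM_pow hsupp p i rectJ) (box_scale_le _ _ hp).
by apply: leq_trans (l0_le _) _; rewrite !mul1n mulnC.
Qed.
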